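(* Let $N\ge 1$ and let the data consist of $(Y_i,D_i,Z_i,X_i)$, $i=1,\dots,N$, with $Y_i\in\mathbb{R}$, $D_i,Z_i\in\{0,1\}$, and let $p$ be a fixed (known) function with values in $(0,1)$; write $p_i=p(X_i)$. Define $\kappa_{i1}=D_i\frac{Z_i-p_i}{p_i(1-p_i)}$, $\kappa_{i0}=(1-D_i)\frac{(1-Z_i)-(1-p_i)}{p_i(1-p_i)}$, $\kappa_i=1-\frac{D_i(1-Z_i)}{1-p_i}-\frac{(1-D_i)Z_i}{p_i}$, and the estimators $$\hat\tau_a=\Big[\sum_i\kappa_i\Big]^{-1}\sum_i Y_i\frac{Z_i-p_i}{p_i(1-p_i)},\quad \hat\tau_{a,1}=\Big[\sum_i\kappa_{i1}\Big]^{-1}\sum_i Y_i\frac{Z_i-p_i}{p_i(1-p_i)},\quad \hat\tau_{a,0}=\Big[\sum_i\kappa_{i0}\Big]^{-1}\sum_i Y_i\frac{Z_i-p_i}{p_i(1-p_i)},$$ $$\hat\tau_t=\Big[\sum_i\frac{D_iZ_i}{p_i}-\sum_i\frac{D_i(1-Z_i)}{1-p_i}\Big]^{-1}\Big[\sum_i\frac{Y_iZ_i}{p_i}-\sum_i\frac{Y_i(1-Z_i)}{1-p_i}\Big],$$ $$\hat\tau_{a,10}=\Big[\sum_i\kappa_{i1}\Big]^{-1}\sum_i\kappa_{i1}Y_i-\Big[\sum_i\kappa_{i0}\Big]^{-1}\sum_i\kappa_{i0}Y_i,$$ $$\hat\tau_{t,norm}=\frac{\big[\sum_i\frac{Z_i}{p_i}\big]^{-1}\sum_i\frac{Y_iZ_i}{p_i}-\big[\sum_i\frac{1-Z_i}{1-p_i}\big]^{-1}\sum_i\frac{Y_i(1-Z_i)}{1-p_i}}{\big[\sum_i\frac{Z_i}{p_i}\big]^{-1}\sum_i\frac{D_iZ_i}{p_i}-\big[\sum_i\frac{1-Z_i}{1-p_i}\big]^{-1}\sum_i\frac{D_i(1-Z_i)}{1-p_i}}$$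 (each considered where its denominators are nonzero). Then $\hat\tau_{t,norm}$ and $\hat\tau_{a,10}$ are translation invariant and scale invariant with respect to the natural logarithm, whereas $\hat\tau_a$, $\hat\tau_t$ ($=\hat\tau_{a,1}$) and $\hat\tau_{a,0}$ are not translation invariant and not scale invariant with respect to the natural logarithm.
   Context: Write $\mathbf{Y}=(Y_1,\dots,Y_N)$ and $\mathbf{W}$ for the remaining data $(D_i,Z_i,X_i)_{i=1}^N$, and view an estimator as a function $\hat\tau(\mathbf{Y},\mathbf{W})$. An estimator is translation invariant if $\hat\tau(\mathbf{Y},\mathbf{W})=\hat\tau(\mathbf{Y}+k,\mathbf{W})$ for all $\mathbf{Y}$, $\mathbf{W}$ and real $k$ (where $\mathbf{Y}+k$ adds $k$ to every coordinate). An estimator is scale invariant with respect to the natural logarithm if $\hat\tau(\log\mathbf{Y},\mathbf{W})=\hat\tau(\log(a\mathbf{Y}),\mathbf{W})$ for all $\mathbf{Y}>0$ (coordinatewise), all $\mathbf{W}$ and all $a>0$, where $\log$ is applied coordinatewise. ''Not translation invariant / not scale invariant'' means these identities fail for some admissible data and some $k$ (resp. $a$). *)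

From HB Require Import structures.
From mathcomp Require Import all_boot all_order all_algebra.
From mathcomp Require Import reals exp.
Set Implicit Arguments. Unset Strict Implicit. Unset Printing Implicit Defensive.
Import Order.TTheory GRing.Theory Num.Theory.
Local Open Scope ring_scope.

Section Estimators.
Variables (R : realType) (T : Type) (N : nat) (p : T -> R).
Implicit Types (Y : 'I_N -> R) (D Z : 'I_N -> bool) (X : 'I_N -> T).

Definition pi X (i : 'I_N) : R := p (X i).

Definition kappa1 D Z X i : R :=
  (D i)%:R * (((Z i)%:R - pi X i) / (pi X i * (1 - pi X i))).
Definition kappa0 D Z X i : R :=
  (1 - (D i)%:R) * (((1 - (Z i)%:R) - (1 - pi X i)) / (pi X i * (1 - pi X i))).
Definition kappa D Z X i : R :=
  1 - (D i)%:R * (1 - (Z i)%:R) / (1 - pi X i) - (1 - (D i)%:R) * (Z i)%:R / pi X i.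

Definition ipw_num Y Z X : R :=
  \sum_(i < N) Y i * (((Z i)%:R - pi X i) / (pi X i * (1 - pi X i))).

Definition tau_a Y D Z X : R := (\sum_(i < N) kappa D Z X i)^-1 * ipw_num Y Z X.
Definition tau_a1 Y D Z X : R := (\sum_(i < N) kappa1 D Z X i)^-1 * ipw_num Y Z X.
Definition tau_a0 Y D Z X : R := (\sum_(i < N) kappa0 D Z X i)^-1 * ipw_num Y Z X.

Definition tau_t_den D Z X : R :=
  \sum_(i < N) (D i)%:R * (Z i)%:R / pi X i
  - \sum_(i < N) (D i)%:R * (1 - (Z i)%:R) / (1 - pi X i).
Definition tau_t Y D Z X : R :=
  (tau_t_den D Z X)^-1 *
  (\sum_(i < N) Y i * (Z i)%:R / pi X i
   - \sum_(i < N) Y i * (1 - (Z i)%:R) / (1 - pi X i)).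

Definition tau_a10 Y D Z X : R :=
  (\sum_(i < N) kappa1 D Z X i)^-1 * (\sum_(i < N) kappa1 D Z X i * Y i)
  - (\sum_(i < N) kappa0 D Z X i)^-1 * (\sum_(i < N) kappa0 D Z X i * Y i).

Definition sZ Z X : R := \sum_(i < N) (Z i)%:R / pi X i.
Definition s1Z Z X : R := \sum_(i < N) (1 - (Z i)%:R) / (1 - pi X i).
Definition tau_tnorm_den D Z X : R :=
  (sZ Z X)^-1 * (\sum_(i < N) (D i)%:R * (Z i)%:R / pi X i)
  - (s1Z Z X)^-1 * (\sum_(i < N) (D i)%:R * (1 - (Z i)%:R) / (1 - pi X i)).
Definition tau_tnorm Y D Z X : R :=
  ((sZ Z X)^-1 * (\sum_(i < N) Y i * (Z i)%:R / pi X i)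
   - (s1Z Z X)^-1 * (\sum_(i < N) Y i * (1 - (Z i)%:R) / (1 - pi X i)))
  / tau_tnorm_den D Z X.

Definition def_a D Z X := \sum_(i < N) kappa D Z X i != 0.
Definition def_a1 D Z X := \sum_(i < N) kappa1 D Z X i != 0.
Definition def_a0 D Z X := \sum_(i < N) kappa0 D Z X i != 0.
Definition def_t D Z X := tau_t_den D Z X != 0.
Definition def_a10 D Z X := def_a1 D Z X && def_a0 D Z X.
Definition def_tnorm D Z X :=
  [&& sZ Z X != 0, s1Z Z X != 0 & tau_tnorm_den D Z X != 0].

Definition estimator := ('I_N -> R) -> ('I_N -> bool) -> ('I_N -> bool) -> ('I_N -> T) -> R.

(* Invariance notions, restricted to data where the estimator is defined. *)
Definition translation_invariant (adm : ('I_N -> bool) -> ('I_N -> bool) -> ('I_N -> T) -> bool)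
  (est : estimator) : Prop :=
  forall Y D Z X, adm D Z X -> forall k : R,
    est Y D Z X = est (fun i => Y i + k) D Z X.

Definition log_scale_invariant (adm : ('I_N -> bool) -> ('I_N -> bool) -> ('I_N -> T) -> bool)
  (est : estimator) : Prop :=
  forall Y D Z X, adm D Z X -> (forall i, 0 < Y i) -> forall a : R, 0 < a ->
    est (fun i => ln (Y i)) D Z X = est (fun i => ln (a * Y i)) D Z X.

End Estimators.

From Pilot Require Import Defs.
From HB Require Import structures.
From mathcomp Require Import all_boot all_order all_algebra.
From mathcomp Require Import reals sequences exp.
From mathcomp Require Import ring.
Set Implicit Arguments. Unset Strict Implicit. Unset Printing Implicit Defensive.
Import Order.TTheory GRing.Theory Num.Theory.
Local Open Scope ring_scope.

(* tau_a10 and the numerator of tau_tnorm are differences of two normalized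
   weighted means of Y: adding k to Y adds k to both means, and rescaling Y by
   a translates ln Y by ln a.  The other estimators divide a weighted sum of Y
   by a sum of different weights, so with constant covariates and a constant
   outcome c they return a nonzero multiple of c, which separates
   Y = 0 = ln 1 from Y = 1 = ln (e * 1). *)

Section Invariance.
Variables (R : realType) (T : Type) (N : nat).
Implicit Types (adm : ('I_N -> bool) -> ('I_N -> bool) -> ('I_N -> T) -> bool)
  (est : estimator R T N).

Lemma translation_invariant_log_scale_invariant adm est :
  translation_invariant adm est -> log_scale_invariant adm est.
Proof.
move=> tr_inv Y D Z X hadm Y_gt0 a a_gt0.
rewrite (tr_inv _ D Z X hadm (ln a)); congr est; apply: boolp.funext => i.
by rewrite lnM ?posrE // addrC.
Qed.

Lemma not_log_scale_invariant adm est D Z X :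
  adm D Z X -> est (fun=> 0) D Z X != est (fun=> 1) D Z X ->
  ~ log_scale_invariant adm est.
Proof.
move=> hadm est01 log_inv.
have := log_inv (fun=> 1) D Z X hadm (fun=> ltr01) (expR 1) (expR_gt0 1).
by rewrite ln1 mulr1 expRK; apply/eqP.
Qed.

Lemma not_invariant adm est D Z X :
  adm D Z X -> est (fun=> 0) D Z X != est (fun=> 1) D Z X ->
  ~ translation_invariant adm est /\ ~ log_scale_invariant adm est.
Proof.
move=> hadm est01; have log_var := not_log_scale_invariant hadm est01.
by split=> // /translation_invariant_log_scale_invariant.
Qed.

End Invariance.

Section WeightedMean.
Variables (F : fieldType) (I : finType).
Implicit Types (w Y : I -> F).

Definition wmean w Y : F := (\sum_i w i)^-1 * \sum_i w i * Y i.

Lemma wmean_shift w Y k :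
  \sum_i w i != 0 -> wmean w (fun i => Y i + k) = wmean w Y + k.
Proof.
move=> w_neq0; rewrite /wmean /=.
have -> : \sum_i w i * (Y i + k) = \sum_i w i * Y i + (\sum_i w i) * k.
  by rewrite mulr_suml -big_split; apply: eq_bigr => i _; rewrite mulrDr.
by rewrite mulrDr mulrA mulVf ?mul1r.
Qed.

Lemma wmean_diff_shift w1 w2 Y k :
  \sum_i w1 i != 0 -> \sum_i w2 i != 0 ->
  wmean w1 (fun i => Y i + k) - wmean w2 (fun i => Y i + k)
  = wmean w1 Y - wmean w2 Y.
Proof. by move=> ? ?; rewrite !wmean_shift // opprD addrACA subrr addr0. Qed.

End WeightedMean.

Lemma ipw_contrast (F : fieldType) (y z q : F) : q != 0 -> 1 - q != 0 ->
  y * z / q - y * (1 - z) / (1 - q) = y * ((z - q) / (q * (1 - q))).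
Proof. by move=> q_neq0 q1_neq0; field; rewrite q_neq0 q1_neq0. Qed.

Section ConstantSums.
Variables (F : numFieldType) (N : nat).
Hypothesis N_gt0 : (0 < N)%N.

Lemma sum_const_neq0 (a : F) : a != 0 -> \sum_(i < N) a != 0.
Proof.
by move=> a_neq0; rewrite sumr_const card_ord mulrn_eq0 negb_or a_neq0 andbT -lt0n.
Qed.

Lemma mean_const (a b : F) : a != 0 -> (\sum_(i < N) a)^-1 * \sum_(i < N) b = b / a.
Proof.
move=> a_neq0; have N_neq0 : N%:R != 0 :> F by rewrite pnatr_eq0 -lt0n.
rewrite !sumr_const card_ord -[a *+ N]mulr_natr -[b *+ N]mulr_natr.
by rewrite invfM mulrACA mulVf // mulr1 mulrC.
Qed.

End ConstantSums.

Section Estimators.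
Variables (R : realType) (T : Type) (N : nat) (p : T -> R).
Hypothesis p_in01 : forall x, 0 < p x < 1.
Implicit Types (Y : 'I_N -> R) (D Z : 'I_N -> bool) (X : 'I_N -> T).

Lemma p_neq0 x : p x != 0.
Proof. by have /andP[p_gt0 _] := p_in01 x; rewrite gt_eqF. Qed.

Lemma onem_p_neq0 x : 1 - p x != 0.
Proof. by have /andP[_ p_lt1] := p_in01 x; rewrite subr_eq0 eq_sym lt_eqF. Qed.

Lemma tau_t_den_kappa1 D Z X : tau_t_den p D Z X = \sum_(i < N) kappa1 p D Z X i.
Proof.
rewrite /tau_t_den -sumrB; apply: eq_bigr => i _.
by rewrite ipw_contrast ?p_neq0 ?onem_p_neq0.
Qed.

Lemma tau_t_tau_a1 Y D Z X : tau_t p Y D Z X = tau_a1 p Y D Z X.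
Proof.
rewrite /tau_t tau_t_den_kappa1 -sumrB; congr (_ * _).
by apply: eq_bigr => i _; rewrite ipw_contrast ?p_neq0 ?onem_p_neq0.
Qed.

Lemma tau_a10_translation_invariant :
  translation_invariant (@def_a10 R T N p) (@tau_a10 R T N p).
Proof.
by move=> Y D Z X /andP[? ?] k; rewrite /tau_a10 -!/(wmean _ _) wmean_diff_shift.
Qed.

Lemma tau_tnorm_wmean Y D Z X :
  tau_tnorm p Y D Z X =
  (wmean (fun i => (Z i)%:R / Defs.pi p X i) Y
   - wmean (fun i => (1 - (Z i)%:R) / (1 - Defs.pi p X i)) Y) / tau_tnorm_den p D Z X.
Proof.
by rewrite /tau_tnorm /wmean; congr ((_ * _ - _ * _) / _); apply: eq_bigr => i _;
  rewrite [RHS]mulrC mulrA.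
Qed.

Lemma tau_tnorm_translation_invariant :
  translation_invariant (@def_tnorm R T N p) (@tau_tnorm R T N p).
Proof.
by move=> Y D Z X /and3P[? ? _] k; rewrite !tau_tnorm_wmean wmean_diff_shift.
Qed.

Section ConstantData.
Variable x0 : T.
Hypothesis N_gt0 : (0 < N)%N.

Lemma kappa_const (i : 'I_N) : kappa p (fun=> true) (fun=> true) (fun=> x0) i = 1.
Proof. by rewrite /kappa /Defs.pi /=; field; rewrite p_neq0 onem_p_neq0. Qed.

Lemma kappa1_const (i : 'I_N) :
  kappa1 p (fun=> true) (fun=> true) (fun=> x0) i = (p x0)^-1.
Proof. by rewrite /kappa1 /Defs.pi /=; field; rewrite p_neq0 onem_p_neq0. Qed.

Lemma kappa0_const (i : 'I_N) :
  kappa0 p (fun=> false) (fun=> true) (fun=> x0) i = - (p x0)^-1.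
Proof. by rewrite /kappa0 /Defs.pi /=; field; rewrite p_neq0 onem_p_neq0. Qed.

Lemma ipw_num_const c :
  ipw_num p (fun _ : 'I_N => c) (fun=> true) (fun=> x0) = \sum_(i < N) c / p x0.
Proof.
by apply: eq_bigr => i _; rewrite /Defs.pi /=; field; rewrite p_neq0 onem_p_neq0.
Qed.

Lemma tau_a_const c :
  tau_a p (fun _ : 'I_N => c) (fun=> true) (fun=> true) (fun=> x0) = c / p x0.
Proof.
rewrite /tau_a ipw_num_const (eq_bigr _ (fun i _ => kappa_const i)).
by rewrite (mean_const N_gt0) ?oner_neq0 // divr1.
Qed.

Lemma tau_a1_const c :
  tau_a1 p (fun _ : 'I_N => c) (fun=> true) (fun=> true) (fun=> x0) = c.
Proof.
rewrite /tau_a1 ipw_num_const (eq_bigr _ (fun i _ => kappa1_const i)).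
by rewrite (mean_const N_gt0) ?invr_eq0 ?p_neq0 // invrK mulfVK ?p_neq0.
Qed.

Lemma tau_a0_const c :
  tau_a0 p (fun _ : 'I_N => c) (fun=> false) (fun=> true) (fun=> x0) = - c.
Proof.
rewrite /tau_a0 ipw_num_const (eq_bigr _ (fun i _ => kappa0_const i)).
rewrite (mean_const N_gt0) ?oppr_eq0 ?invr_eq0 ?p_neq0 //.
by rewrite invrN invrK mulrN mulfVK ?p_neq0.
Qed.

Lemma tau_a_not_invariant :
  ~ translation_invariant (@def_a R T N p) (@tau_a R T N p) /\
  ~ log_scale_invariant (@def_a R T N p) (@tau_a R T N p).
Proof.
apply: (not_invariant (D := fun=> true) (Z := fun=> true) (X := fun=> x0)).
  by rewrite /def_a (eq_bigr _ (fun i _ => kappa_const i)) (sum_const_neq0 N_gt0) ?oner_neq0.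
by rewrite !tau_a_const mul0r mul1r eq_sym invr_eq0 p_neq0.
Qed.

Lemma tau_a1_not_invariant :
  ~ translation_invariant (@def_a1 R T N p) (@tau_a1 R T N p) /\
  ~ log_scale_invariant (@def_a1 R T N p) (@tau_a1 R T N p).
Proof.
apply: (not_invariant (D := fun=> true) (Z := fun=> true) (X := fun=> x0)).
  by rewrite /def_a1 (eq_bigr _ (fun i _ => kappa1_const i))
    (sum_const_neq0 N_gt0) ?invr_eq0 ?p_neq0.
by rewrite !tau_a1_const eq_sym oner_eq0.
Qed.

Lemma tau_t_not_invariant :
  ~ translation_invariant (@def_t R T N p) (@tau_t R T N p) /\
  ~ log_scale_invariant (@def_t R T N p) (@tau_t R T N p).
Proof.
apply: (not_invariant (D := fun=> true) (Z := fun=> true) (X := fun=> x0)).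
  by rewrite /def_t tau_t_den_kappa1 (eq_bigr _ (fun i _ => kappa1_const i))
    (sum_const_neq0 N_gt0) ?invr_eq0 ?p_neq0.
by rewrite !tau_t_tau_a1 !tau_a1_const eq_sym oner_eq0.
Qed.

Lemma tau_a0_not_invariant :
  ~ translation_invariant (@def_a0 R T N p) (@tau_a0 R T N p) /\
  ~ log_scale_invariant (@def_a0 R T N p) (@tau_a0 R T N p).
Proof.
apply: (not_invariant (D := fun=> false) (Z := fun=> true) (X := fun=> x0)).
  by rewrite /def_a0 (eq_bigr _ (fun i _ => kappa0_const i))
    (sum_const_neq0 N_gt0) ?oppr_eq0 ?invr_eq0 ?p_neq0.
by rewrite !tau_a0_const oppr0 eq_sym oppr_eq0 oner_eq0.
Qed.

End ConstantData.

End Estimators.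

Theorem proposition1 (R : realType) (T : Type) (x0 : T) (N : nat) (p : T -> R)
  (hN : (1 <= N)%N) (hp : forall x, 0 < p x < 1) :
  (* tau_t_norm and tau_a10 are invariant *)
  translation_invariant (@def_tnorm R T N p) (@tau_tnorm R T N p) /\
  log_scale_invariant (@def_tnorm R T N p) (@tau_tnorm R T N p) /\
  translation_invariant (@def_a10 R T N p) (@tau_a10 R T N p) /\
  log_scale_invariant (@def_a10 R T N p) (@tau_a10 R T N p) /\
  (* tau_t = tau_a1 *)
  (forall Y D Z X, @def_t R T N p D Z X ->
     @tau_t R T N p Y D Z X = @tau_a1 R T N p Y D Z X) /\
  (* tau_a, tau_t (= tau_a1), tau_a1 and tau_a0 are not invariant *)
  ~ translation_invariant (@def_a R T N p) (@tau_a R T N p) /\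
  ~ log_scale_invariant (@def_a R T N p) (@tau_a R T N p) /\
  ~ translation_invariant (@def_t R T N p) (@tau_t R T N p) /\
  ~ log_scale_invariant (@def_t R T N p) (@tau_t R T N p) /\
  ~ translation_invariant (@def_a1 R T N p) (@tau_a1 R T N p) /\
  ~ log_scale_invariant (@def_a1 R T N p) (@tau_a1 R T N p) /\
  ~ translation_invariant (@def_a0 R T N p) (@tau_a0 R T N p) /\
  ~ log_scale_invariant (@def_a0 R T N p) (@tau_a0 R T N p).
Proof.
have tnorm_inv := @tau_tnorm_translation_invariant R T N p.
have a10_inv := @tau_a10_translation_invariant R T N p.
have [a_tr a_log] := tau_a_not_invariant hp x0 hN.
have [t_tr t_log] := tau_t_not_invariant hp x0 hN.
have [a1_tr a1_log] := tau_a1_not_invariant hp x0 hN.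
have [a0_tr a0_log] := tau_a0_not_invariant hp x0 hN.
split; first exact: tnorm_inv.
split; first exact: translation_invariant_log_scale_invariant tnorm_inv.
split; first exact: a10_inv.
split; first exact: translation_invariant_log_scale_invariant a10_inv.
split; first by move=> Y D Z X _; rewrite (tau_t_tau_a1 hp).
by do !split.
Qed.
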